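(* The facets of the convex hull in $K\otimes\mathbb R\cong\mathbb R^3$ of the set of totally positive elements of $\mathcal O$ are precisely the translates, under multiplication by totally positive units of $\mathcal O$, of the two triangles with vertices $\{1,\ w^2,\ (w+1)^2\}$ and $\{1,\ w+2,\ (w+1)^2\}$.
   Context: $w=\zeta_7+\zeta_7^{-1}$ with $\zeta_7=e^{2\pi i/7}$, $K=\mathbb Q(w)$ the totally real cubic field of discriminant $49$, $\mathcal O=\mathbb Z[w]$ its ring of integers ($w^3+w^2-2w-1=0$). $K\otimes\mathbb R$ is identified with $\mathbb R^3$ via the three real embeddings; an element is totally positive if all three images are positive. *)

From Stdlib Require Import Reals List ZArith.
Open Scope R_scope.

(* A point of K (x) R = R^3, coordinates given by the three real embeddings. *)
Record pt := Pt { px : R; py : R; pz : R }.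

Definition padd (x y : pt) : pt := Pt (px x + px y) (py x + py y) (pz x + pz y).
Definition pscale (t : R) (x : pt) : pt := Pt (t * px x) (t * py x) (t * pz x).
(* multiplication in K (x) R = componentwise multiplication *)
Definition pmul (x y : pt) : pt := Pt (px x * px y) (py x * py y) (pz x * pz y).
Definition pzero : pt := Pt 0 0 0.

(* The three real embeddings send w = zeta_7 + zeta_7^{-1} to
   theta k = 2 cos (2 pi k / 7), k = 1, 2, 3 (the roots of x^3+x^2-2x-1). *)
Definition theta (k : nat) : R := 2 * cos (2 * PI * INR k / 7).

(* image in R^3 of a + b w + c w^2 (1, w, w^2 is a Z-basis of O = Z[w]) *)
Definition emb (a b c : Z) : pt :=
  let f k := IZR a + IZR b * theta k + IZR c * theta k ^ 2 in
  Pt (f 1%nat) (f 2%nat) (f 3%nat).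

Definition in_O (x : pt) : Prop := exists a b c : Z, x = emb a b c.

Definition totally_positive (x : pt) : Prop := 0 < px x /\ 0 < py x /\ 0 < pz x.

Definition unit_O (u : pt) : Prop :=
  in_O u /\ exists v, in_O v /\ pmul u v = Pt 1 1 1.

Definition O_plus (x : pt) : Prop := in_O x /\ totally_positive x.

Definition conv (S : pt -> Prop) (x : pt) : Prop :=
  exists l : list (R * pt),
    Forall (fun tp => 0 <= fst tp /\ S (snd tp)) l /\
    fold_right (fun tp s => fst tp + s) 0 l = 1 /\
    x = fold_right (fun tp acc => padd (pscale (fst tp) (snd tp)) acc) pzero l.

Definition lin (a x : pt) : R := px a * px x + py a * py x + pz a * pz x.

Definition psub (x y : pt) : pt := padd x (pscale (-1) y).

Definition aff_indep3 (p q r : pt) : Prop :=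
  forall s t : R, padd (pscale s (psub q p)) (pscale t (psub r p)) = pzero ->
    s = 0 /\ t = 0.

(* F is a facet of C in R^3: the intersection of C with a supporting plane
   {x | lin a x = c} (C lying in {lin a x >= c}), of affine dimension 2. *)
Definition is_facet (C F : pt -> Prop) : Prop :=
  exists (a : pt) (c : R),
    a <> pzero /\
    (forall x, C x -> c <= lin a x) /\
    (forall x, F x <-> (C x /\ lin a x = c)) /\
    exists p q r, F p /\ F q /\ F r /\ aff_indep3 p q r.

Definition one_O : pt := emb 1 0 0.
Definition w_O : pt := emb 0 1 0.

Definition tri1 (x : pt) : Prop :=
  x = one_O \/ x = pmul w_O w_O \/ x = pmul (padd w_O one_O) (padd w_O one_O).
Definition tri2 (x : pt) : Prop :=
  x = one_O \/ x = padd w_O (padd one_O one_O) \/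
  x = pmul (padd w_O one_O) (padd w_O one_O).

Definition mul_set (u : pt) (S : pt -> Prop) (y : pt) : Prop :=
  exists x, S x /\ y = pmul u x.

(* In coordinates on the basis 1, w, w^2, O is Z^3, and for totally positive delta the form
   x |-> Tr (delta x) is positive on totally positive x; when it is integral on O it is >= 1
   there. Finitely many such cuts show that the plane of each of the two triangles supports the
   totally positive integers and meets them only in the three vertices, so the unit translates
   of the triangles are facets.
   Conversely, a facet contains three affinely independent totally positive integers, so its
   plane has an integral normal n. Translating by a totally positive unit on which n is minimal
   makes n minimal at 1 against the six neighbouring units alpha^(+-1), beta^(+-1),
   (alpha beta)^(+-1), where alpha = w^2 and beta = w + 2. The normal cone at 1 is spanned by
   the normals of the six triangles through 1, all unit translates of the two given ones, and
   a face meeting one of these triangles in three points is that triangle. *)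

From Stdlib Require Import Reals Lra Lia ZArith List Classical.
Import ListNotations.
Open Scope R_scope.

(** * The real embeddings of w *)

Definition w : R := theta 1.

Definition minpoly (t : R) : R := t ^ 3 + t ^ 2 - 2 * t - 1.

Lemma theta_relations :
  minpoly w = 0 /\ theta 2 = w ^ 2 - 2 /\ theta 3 = 1 - w - w ^ 2 /\ 1 < w < 2.
Proof.
  set (x := 2 * PI / 7).
  assert (Hw : w = 2 * cos x) by (unfold w, theta, x; simpl INR; do 2 f_equal; field).
  assert (H2 : theta 2 = 2 * cos (2 * x)) by (unfold theta, x; simpl INR; do 2 f_equal; field).
  assert (H3 : theta 3 = 2 * cos (2 * x + x)) by (unfold theta, x; simpl INR; do 2 f_equal; field).
  assert (Hc2 : cos (2 * x) = 2 * cos x * cos x - 1) by apply cos_2a_cos.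
  assert (Hc3 : cos (2 * x + x) = 4 * cos x ^ 3 - 3 * cos x).
  { rewrite cos_plus, cos_2a_cos, sin_2a.
    pose proof (sin2_cos2 x) as Hs. unfold Rsqr in Hs.
    replace (2 * sin x * cos x * sin x) with (2 * cos x * (sin x * sin x)) by ring.
    replace (sin x * sin x) with (1 - cos x * cos x) by lra. ring. }
  (* 4x = 2 pi - 3x, so cos 4x = cos 3x: a polynomial identity in cos x *)
  assert (H4 : cos (2 * (2 * x)) = cos (2 * x + x)).
  { replace (2 * (2 * x)) with (2 * PI - (2 * x + x)) by (unfold x; field).
    rewrite cos_minus, cos_2PI, sin_2PI. ring. }
  rewrite cos_2a_cos, Hc2, Hc3 in H4.
  pose proof PI_RGT_0.
  assert (Hlo : 1 / 2 < cos x) by (rewrite <- cos_PI3; apply cos_decreasing_1; unfold x; lra).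
  assert (Hhi : cos x < 1) by (rewrite <- cos_0; apply cos_decreasing_1; unfold x; lra).
  assert (Hcub : minpoly w = 0).
  { assert (E : (2 * cos x - 2) * minpoly (2 * cos x) = 0) by (unfold minpoly; nra).
    rewrite Hw. apply Rmult_integral in E as [E|E]; [lra|exact E]. }
  split; [exact Hcub|]. split; [rewrite H2, Hc2, Hw; ring|].
  split; [|rewrite Hw; lra].
  unfold minpoly in Hcub. rewrite H3, Hc3, Hw. rewrite Hw in Hcub. nra.
Qed.

Lemma minpoly_w : minpoly w = 0.
Proof. apply theta_relations. Qed.

Lemma theta2_w : theta 2 = w ^ 2 - 2.
Proof. apply theta_relations. Qed.

Lemma theta3_w : theta 3 = 1 - w - w ^ 2.
Proof. apply theta_relations. Qed.

Lemma w_bounds : 1.2469796 < w < 1.2469797.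
Proof.
  destruct theta_relations as (H & _ & _ & H1 & H2). unfold minpoly in H.
  split; apply Rnot_le_lt; intro; nra.
Qed.

Lemma theta_bounds :
  1.2469796 < theta 1 < 1.2469797 /\ 1.5549581 < theta 1 ^ 2 < 1.5549584 /\
  -0.4450419 < theta 2 < -0.4450416 /\ 0.1980619 < theta 2 ^ 2 < 0.1980623 /\
  -1.8019381 < theta 3 < -1.8019377 /\ 3.2469796 < theta 3 ^ 2 < 3.2469797.
Proof.
  pose proof minpoly_w as H. unfold minpoly in H.
  change (theta 1) with w. rewrite theta2_w, theta3_w.
  replace ((w ^ 2 - 2) ^ 2) with (3 - w - w ^ 2 + (w ^ 3 + w ^ 2 - 2 * w - 1) * (w - 1)) by ring.
  replace ((1 - w - w ^ 2) ^ 2) with (2 + w + (w ^ 3 + w ^ 2 - 2 * w - 1) * (w + 1)) by ring.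
  rewrite H. destruct w_bounds. repeat split; nra.
Qed.

Ltac theta_numerics :=
  pose proof theta_bounds as (? & ? & ? & ? & ? & ?); lra.

Lemma minpoly_theta (k : nat) : (1 <= k <= 3)%nat -> minpoly (theta k) = 0.
Proof.
  pose proof minpoly_w as H. unfold minpoly in *.
  intros Hk; destruct k as [|[|[|[|k]]]]; try lia.
  - exact H.
  - rewrite theta2_w.
    replace _ with ((w ^ 3 + w ^ 2 - 2 * w - 1) * (1 - 2 * w - w ^ 2 + w ^ 3)) by ring.
    rewrite H; ring.
  - rewrite theta3_w.
    replace _ with ((w ^ 3 + w ^ 2 - 2 * w - 1) * (1 + w - 2 * w ^ 2 - w ^ 3)) by ring.
    rewrite H; ring.
Qed.

Definition power_sum (j : nat) : R := theta 1 ^ j + theta 2 ^ j + theta 3 ^ j.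

Lemma power_sums :
  power_sum 0 = 3 /\ power_sum 1 = -1 /\ power_sum 2 = 5 /\
  power_sum 3 = -4 /\ power_sum 4 = 13.
Proof.
  pose proof minpoly_w as H. unfold minpoly in H. unfold power_sum.
  change (theta 1) with w. rewrite theta2_w, theta3_w.
  repeat split; simpl; [ring|ring| | |].
  - replace _ with (5 + (w ^ 3 + w ^ 2 - 2 * w - 1) * (2 * w)) by ring. rewrite H; ring.
  - replace _ with (-4 + (w ^ 3 + w ^ 2 - 2 * w - 1) * (3 - 3 * w - 3 * w ^ 2)) by ring.
    rewrite H; ring.
  - replace _ with (13 + (w ^ 3 + w ^ 2 - 2 * w - 1)
                       * (-4 + 12 * w + 2 * w ^ 2 - 4 * w ^ 3 + 2 * w ^ 4 + 2 * w ^ 5)) by ring.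
    rewrite H; ring.
Qed.

Lemma theta_distinct : theta 1 <> theta 2 /\ theta 1 <> theta 3 /\ theta 2 <> theta 3.
Proof. repeat split; intro; theta_numerics. Qed.

Lemma pt_ext x y : px x = px y -> py x = py y -> pz x = pz y -> x = y.
Proof. destruct x, y; cbn; intros; subst; reflexivity. Qed.

Ltac pt_ring := apply pt_ext; unfold psub, padd, pscale, pmul, pzero; cbn [px py pz]; ring.

Lemma lin_padd a x y : lin a (padd x y) = lin a x + lin a y.
Proof. unfold lin, padd; cbn; ring. Qed.

Lemma lin_pscale a t x : lin a (pscale t x) = t * lin a x.
Proof. unfold lin, pscale; cbn; ring. Qed.

Lemma lin_pzero a : lin a pzero = 0.
Proof. unfold lin, pzero; cbn; ring. Qed.

Definition ev (t a b c : R) : R := a + b * t + c * t ^ 2.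

Definition basis_map (y : pt) : pt :=
  Pt (ev (theta 1) (px y) (py y) (pz y))
     (ev (theta 2) (px y) (py y) (pz y))
     (ev (theta 3) (px y) (py y) (pz y)).

Lemma basis_map_padd x y : basis_map (padd x y) = padd (basis_map x) (basis_map y).
Proof. unfold basis_map, ev; pt_ring. Qed.

Lemma basis_map_pscale t x : basis_map (pscale t x) = pscale t (basis_map x).
Proof. unfold basis_map, ev; pt_ring. Qed.

Lemma basis_map_eq0 y : basis_map y = pzero -> y = pzero.
Proof.
  destruct y as [y0 y1 y2]. unfold basis_map, ev, pzero; cbn [px py pz]. intro E.
  injection E as e1 e2 e3.
  destruct theta_distinct as (d12 & d13 & d23).
  set (t1 := theta 1) in *; set (t2 := theta 2) in *; set (t3 := theta 3) in *.
  assert (A : (t1 - t2) * (y1 + y2 * (t1 + t2)) = 0)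
    by (transitivity ((y0 + y1 * t1 + y2 * t1 ^ 2) - (y0 + y1 * t2 + y2 * t2 ^ 2)); [ring|lra]).
  assert (B : (t1 - t3) * (y1 + y2 * (t1 + t3)) = 0)
    by (transitivity ((y0 + y1 * t1 + y2 * t1 ^ 2) - (y0 + y1 * t3 + y2 * t3 ^ 2)); [ring|lra]).
  apply Rmult_integral in A as [A|A]; [exfalso; apply d12; lra|].
  apply Rmult_integral in B as [B|B]; [exfalso; apply d13; lra|].
  assert (C : y2 * (t2 - t3) = 0) by lra.
  apply Rmult_integral in C as [C|C]; [|exfalso; apply d23; lra].
  subst y2. assert (y1 = 0) by lra. subst y1. f_equal; lra.
Qed.

Definition basis_dual (a : pt) : pt :=
  Pt (px a + py a + pz a)
     (px a * theta 1 + py a * theta 2 + pz a * theta 3)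
     (px a * theta 1 ^ 2 + py a * theta 2 ^ 2 + pz a * theta 3 ^ 2).

Lemma lin_basis_map a y : lin a (basis_map y) = lin (basis_dual a) y.
Proof. unfold lin, basis_map, basis_dual, ev; cbn; ring. Qed.

Lemma basis_dual_eq0 a : basis_dual a = pzero -> a = pzero.
Proof.
  destruct a as [a1 a2 a3]. intro E.
  pose proof (f_equal px E) as e0; pose proof (f_equal py E) as e1; pose proof (f_equal pz E) as e2.
  unfold basis_dual, pzero in e0, e1, e2; cbn [px py pz] in e0, e1, e2.
  destruct theta_distinct as (d12 & d13 & d23).
  set (t1 := theta 1) in *; set (t2 := theta 2) in *; set (t3 := theta 3) in *.
  (* Lagrange interpolation *)
  assert (E1 : a1 * ((t1 - t2) * (t1 - t3)) = 0).
  { replace (a1 * _) with ((a1 * t1 ^ 2 + a2 * t2 ^ 2 + a3 * t3 ^ 2)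
      - (t2 + t3) * (a1 * t1 + a2 * t2 + a3 * t3) + t2 * t3 * (a1 + a2 + a3)) by ring.
    rewrite e0, e1, e2; ring. }
  assert (E2 : a2 * ((t2 - t1) * (t2 - t3)) = 0).
  { replace (a2 * _) with ((a1 * t1 ^ 2 + a2 * t2 ^ 2 + a3 * t3 ^ 2)
      - (t1 + t3) * (a1 * t1 + a2 * t2 + a3 * t3) + t1 * t3 * (a1 + a2 + a3)) by ring.
    rewrite e0, e1, e2; ring. }
  assert (E3 : a3 * ((t3 - t1) * (t3 - t2)) = 0).
  { replace (a3 * _) with ((a1 * t1 ^ 2 + a2 * t2 ^ 2 + a3 * t3 ^ 2)
      - (t1 + t2) * (a1 * t1 + a2 * t2 + a3 * t3) + t1 * t2 * (a1 + a2 + a3)) by ring.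
    rewrite e0, e1, e2; ring. }
  apply Rmult_integral in E1 as [E1|E1];
    [|apply Rmult_integral in E1 as [|]; exfalso; [apply d12|apply d13]; lra].
  apply Rmult_integral in E2 as [E2|E2];
    [|apply Rmult_integral in E2 as [|]; exfalso; [apply d12|apply d23]; lra].
  apply Rmult_integral in E3 as [E3|E3];
    [|apply Rmult_integral in E3 as [|]; exfalso; [apply d13|apply d23]; lra].
  subst; reflexivity.
Qed.

(* The trace form [Tr (x y)] in coordinates; its Gram matrix is [(power_sum (i + j))]. *)
Definition trace_gram (d : pt) : pt :=
  Pt (3 * px d - py d + 5 * pz d)
     (- px d + 5 * py d - 4 * pz d)
     (5 * px d - 4 * py d + 13 * pz d).

Lemma lin_basis_map_gram d y : lin (basis_map d) (basis_map y) = lin (trace_gram d) y.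
Proof.
  destruct d as [d0 d1 d2], y as [y0 y1 y2].
  destruct power_sums as (S0 & S1 & S2 & S3 & S4).
  transitivity (d0 * y0 * power_sum 0 + (d0 * y1 + d1 * y0) * power_sum 1
    + (d0 * y2 + d1 * y1 + d2 * y0) * power_sum 2 + (d1 * y2 + d2 * y1) * power_sum 3
    + d2 * y2 * power_sum 4).
  - unfold lin, basis_map, ev, power_sum; cbn; ring.
  - rewrite S0, S1, S2, S3, S4. unfold lin, trace_gram; cbn; ring.
Qed.

Lemma ev_mul t a0 a1 a2 b0 b1 b2 : minpoly t = 0 ->
  ev t a0 a1 a2 * ev t b0 b1 b2 =
  ev t (a0 * b0 + (a1 * b2 + a2 * b1) - a2 * b2)
       (a0 * b1 + a1 * b0 + 2 * (a1 * b2 + a2 * b1) - a2 * b2)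
       (a0 * b2 + a1 * b1 + a2 * b0 - (a1 * b2 + a2 * b1) + 3 * (a2 * b2)).
Proof.
  intro H. unfold minpoly in H. unfold ev.
  replace (_ * _) with (ev t (a0 * b0 + (a1 * b2 + a2 * b1) - a2 * b2)
       (a0 * b1 + a1 * b0 + 2 * (a1 * b2 + a2 * b1) - a2 * b2)
       (a0 * b2 + a1 * b1 + a2 * b0 - (a1 * b2 + a2 * b1) + 3 * (a2 * b2))
     + (t ^ 3 + t ^ 2 - 2 * t - 1) * ((a1 * b2 + a2 * b1) + a2 * b2 * (t - 1)))
    by (unfold ev; ring).
  rewrite H. unfold ev. ring.
Qed.

(** * Arithmetic of O in coordinates *)

(* An element [x0 + x1 w + x2 w^2] of O = Z[w], by its coordinates. *)
Record zw := ZW { zw0 : Z; zw1 : Z; zw2 : Z }.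

Lemma zw_ext x y : zw0 x = zw0 y -> zw1 x = zw1 y -> zw2 x = zw2 y -> x = y.
Proof. destruct x, y; cbn; intros; subst; reflexivity. Qed.

Definition coords (x : zw) : pt := Pt (IZR (zw0 x)) (IZR (zw1 x)) (IZR (zw2 x)).

Definition zw_emb (x : zw) : pt := emb (zw0 x) (zw1 x) (zw2 x).

Lemma zw_emb_basis x : zw_emb x = basis_map (coords x).
Proof. reflexivity. Qed.

Lemma in_O_zw y : in_O y <-> exists x, y = zw_emb x.
Proof.
  split.
  - intros (a & b & c & ->). exists (ZW a b c). reflexivity.
  - intros [[a b c] ->]. exists a, b, c. reflexivity.
Qed.

Definition zw_dot (n x : zw) : Z := (zw0 n * zw0 x + zw1 n * zw1 x + zw2 n * zw2 x)%Z.

Lemma lin_coords n x : lin (coords n) (coords x) = IZR (zw_dot n x).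
Proof. unfold lin, coords, zw_dot; cbn. rewrite !plus_IZR, !mult_IZR. ring. Qed.

Definition zw_one : zw := ZW 1 0 0.

Definition zw_mul (a b : zw) : zw :=
  ZW (zw0 a * zw0 b + (zw1 a * zw2 b + zw2 a * zw1 b) - zw2 a * zw2 b)
     (zw0 a * zw1 b + zw1 a * zw0 b + 2 * (zw1 a * zw2 b + zw2 a * zw1 b) - zw2 a * zw2 b)
     (zw0 a * zw2 b + zw1 a * zw1 b + zw2 a * zw0 b - (zw1 a * zw2 b + zw2 a * zw1 b)
      + 3 * (zw2 a * zw2 b)).

Lemma zw_emb_mul x y : pmul (zw_emb x) (zw_emb y) = zw_emb (zw_mul x y).
Proof.
  destruct x as [a0 a1 a2], y as [b0 b1 b2]. rewrite !zw_emb_basis.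
  unfold pmul, basis_map, coords, zw_mul; cbn [px py pz zw0 zw1 zw2].
  rewrite !(ev_mul (theta _)) by (apply minpoly_theta; lia).
  repeat rewrite ?minus_IZR, ?plus_IZR, ?mult_IZR. reflexivity.
Qed.

Lemma zw_emb_one : zw_emb zw_one = Pt 1 1 1.
Proof. unfold zw_emb, emb; cbn. f_equal; ring. Qed.

Lemma zw_emb_inj x y : zw_emb x = zw_emb y -> x = y.
Proof.
  rewrite !zw_emb_basis. intro E.
  assert (D : basis_map (padd (coords x) (pscale (-1) (coords y))) = pzero).
  { rewrite basis_map_padd, basis_map_pscale, E. pt_ring. }
  apply basis_map_eq0 in D. destruct x as [x0 x1 x2], y as [y0 y1 y2].
  pose proof (f_equal px D); pose proof (f_equal py D); pose proof (f_equal pz D).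
  unfold padd, pscale, coords, pzero in *; cbn [px py pz zw0 zw1 zw2] in *.
  apply zw_ext; cbn; apply eq_IZR; lra.
Qed.

Ltac zw_ring := apply zw_ext; unfold zw_mul, zw_one; cbn [zw0 zw1 zw2]; ring.

Lemma zw_mulC x y : zw_mul x y = zw_mul y x.
Proof. destruct x, y; zw_ring. Qed.

Lemma zw_mulA x y z : zw_mul x (zw_mul y z) = zw_mul (zw_mul x y) z.
Proof. destruct x, y, z; zw_ring. Qed.

Lemma zw_mul1 x : zw_mul zw_one x = x.
Proof. destruct x; zw_ring. Qed.

Lemma zw_mulr1 x : zw_mul x zw_one = x.
Proof. rewrite zw_mulC. apply zw_mul1. Qed.

Lemma zw_mulKV u v x : zw_mul u v = zw_one -> zw_mul u (zw_mul v x) = x.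
Proof. intro h. rewrite zw_mulA, h. apply zw_mul1. Qed.

Definition zw_twist (n u : zw) : zw :=
  ZW (zw_dot n (zw_mul u (ZW 1 0 0))) (zw_dot n (zw_mul u (ZW 0 1 0)))
     (zw_dot n (zw_mul u (ZW 0 0 1))).

Lemma zw_dot_twist n u x : zw_dot n (zw_mul u x) = zw_dot (zw_twist n u) x.
Proof. destruct n, u, x; unfold zw_twist, zw_dot, zw_mul; cbn [zw0 zw1 zw2]; ring. Qed.

Lemma zw_dot_eq0 n : (forall x, zw_dot n x = 0%Z) -> n = ZW 0 0 0.
Proof.
  intro H. pose proof (H (ZW 1 0 0)); pose proof (H (ZW 0 1 0)); pose proof (H (ZW 0 0 1)).
  unfold zw_dot in *; cbn in *. apply zw_ext; cbn; lia.
Qed.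

Lemma tp_pmul x y : totally_positive x -> totally_positive y -> totally_positive (pmul x y).
Proof. intros (? & ? & ?) (? & ? & ?). unfold pmul; repeat split; cbn; nra. Qed.

Lemma tp_pmul_inv u v : totally_positive u -> pmul u v = Pt 1 1 1 -> totally_positive v.
Proof.
  intros (? & ? & ?) E.
  pose proof (f_equal px E); pose proof (f_equal py E); pose proof (f_equal pz E).
  unfold pmul in *; cbn in *. repeat split; nra.
Qed.

Lemma lin_tp_pos a x : totally_positive a -> totally_positive x -> 0 < lin a x.
Proof. intros (? & ? & ?) (? & ? & ?). unfold lin. nra. Qed.

Definition zw_tp (x : zw) : Prop := totally_positive (zw_emb x).

Lemma zw_tp_mul x y : zw_tp x -> zw_tp y -> zw_tp (zw_mul x y).
Proof. unfold zw_tp. rewrite <- zw_emb_mul. apply tp_pmul. Qed.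

Definition tp_unit (u : zw) : Prop := zw_tp u /\ exists v, zw_mul u v = zw_one.

Lemma tp_unit_inv u v : tp_unit u -> zw_mul u v = zw_one -> tp_unit v.
Proof.
  intros [Hu _] E. split.
  - apply (tp_pmul_inv (zw_emb u)); [exact Hu|]. rewrite zw_emb_mul, E. apply zw_emb_one.
  - exists u. rewrite zw_mulC. exact E.
Qed.

Lemma tp_unit_mul u v : tp_unit u -> tp_unit v -> tp_unit (zw_mul u v).
Proof.
  intros [Hu [u' Eu]] [Hv [v' Ev]]. split; [apply zw_tp_mul; assumption|].
  exists (zw_mul u' v').
  rewrite <- zw_mulA, (zw_mulA v u' v'), (zw_mulC v u'), <- (zw_mulA u' v v'), Ev, zw_mulr1.
  exact Eu.
Qed.

Lemma unit_O_tp u : unit_O u /\ totally_positive u <-> exists g, tp_unit g /\ u = zw_emb g.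
Proof.
  split.
  - intros [[Hu [v [Hv E]]] Hp]. apply in_O_zw in Hu as [g ->]. apply in_O_zw in Hv as [h ->].
    exists g. split; [|reflexivity]. split; [exact Hp|]. exists h.
    apply zw_emb_inj. rewrite <- zw_emb_mul, E. symmetry. apply zw_emb_one.
  - intros [g [[Hg [h E]] ->]]. split; [|exact Hg]. split; [apply in_O_zw; eauto|].
    exists (zw_emb h). split; [apply in_O_zw; eauto|]. rewrite zw_emb_mul, E. apply zw_emb_one.
Qed.

(* The element of K (x) R representing the functional [zw_dot l] through the trace form;
   the inverse Gram matrix of the trace form is [1/7 [[7,-1,-3],[-1,2,1],[-3,1,2]]]. *)
Definition tdual (l : zw) : pt :=
  let l0 := IZR (zw0 l) in let l1 := IZR (zw1 l) in let l2 := IZR (zw2 l) in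
  basis_map (Pt ((7 * l0 - l1 - 3 * l2) / 7) ((- l0 + 2 * l1 + l2) / 7)
                ((- 3 * l0 + l1 + 2 * l2) / 7)).

Lemma lin_tdual l x : lin (tdual l) (zw_emb x) = IZR (zw_dot l x).
Proof.
  unfold tdual. rewrite zw_emb_basis, lin_basis_map_gram, <- lin_coords. f_equal.
  unfold trace_gram, coords; apply pt_ext; cbn [px py pz]; field.
Qed.

Lemma zw_dot_pos l x : totally_positive (tdual l) -> zw_tp x -> (0 < zw_dot l x)%Z.
Proof. intros Hl Hx. apply lt_IZR. rewrite <- lin_tdual. apply lin_tp_pos; assumption. Qed.

Definition alpha : zw := ZW 0 0 1.
Definition beta : zw := ZW 2 1 0.
Definition alpha_beta : zw := ZW 1 2 1.
Definition alpha_inv : zw := ZW 5 (-1) (-2).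
Definition beta_inv : zw := ZW 0 (-1) 1.
Definition alpha_beta_inv : zw := ZW 3 (-1) (-1).

Ltac tp_numerics :=
  unfold zw_tp, zw_emb, emb, tdual, basis_map, ev, totally_positive,
    zw_one, alpha, beta, alpha_beta, alpha_inv, beta_inv, alpha_beta_inv;
  cbn [px py pz zw0 zw1 zw2]; repeat split; theta_numerics.

Lemma alpha_beta_mul : zw_mul alpha beta = alpha_beta.
Proof. reflexivity. Qed.

Lemma tp_unit_one : tp_unit zw_one.
Proof. split; [tp_numerics|exists zw_one; reflexivity]. Qed.

Lemma tp_unit_alpha : tp_unit alpha.
Proof. split; [tp_numerics|exists alpha_inv; reflexivity]. Qed.

Lemma tp_unit_beta : tp_unit beta.
Proof. split; [tp_numerics|exists beta_inv; reflexivity]. Qed.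

Lemma tp_unit_alpha_beta : tp_unit alpha_beta.
Proof. rewrite <- alpha_beta_mul. apply tp_unit_mul; [apply tp_unit_alpha|apply tp_unit_beta]. Qed.

Definition tile (b : bool) : pt -> Prop := if b then tri1 else tri2.

Definition tile_apex (b : bool) : zw := if b then alpha else beta.

Definition tile_verts (b : bool) : list zw := [zw_one; tile_apex b; alpha_beta].

Definition tile_normal (b : bool) : zw := if b then ZW 2 (-1) 2 else ZW 1 (-1) 2.

Definition tile_level (b : bool) : Z := if b then 2%Z else 1%Z.

Lemma tile_emb b z : tile b z <-> exists t, In t (tile_verts b) /\ z = zw_emb t.
Proof.
  assert (E1 : one_O = zw_emb zw_one) by reflexivity.
  assert (Ea : pmul w_O w_O = zw_emb alpha) by apply (zw_emb_mul (ZW 0 1 0) (ZW 0 1 0)).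
  assert (Eb : padd w_O (padd one_O one_O) = zw_emb beta).
  { unfold w_O, one_O, zw_emb, emb, padd; cbn [px py pz zw0 zw1 zw2 beta]. f_equal; ring. }
  assert (Eab : pmul (padd w_O one_O) (padd w_O one_O) = zw_emb alpha_beta).
  { replace (padd w_O one_O) with (zw_emb (ZW 1 1 0))
      by (unfold w_O, one_O, zw_emb, emb, padd; cbn [px py pz zw0 zw1 zw2]; f_equal; ring).
    apply zw_emb_mul. }
  unfold tile, tri1, tri2; destruct b; rewrite ?Eab, ?Eb, ?Ea, ?E1; cbn [tile_verts In];
    (split; [ intros [H|[H|H]]; subst z; eexists; (split; [|reflexivity]); tauto
            | intros (t & Ht & ->); destruct Ht as [<-|[<-|[<-|[]]]]; tauto ]).
Qed.

Lemma tile_verts_tp b t : In t (tile_verts b) -> zw_tp t.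
Proof.
  destruct b; intros [<-|[<-|[<-|[]]]];
    apply tp_unit_one || apply tp_unit_alpha || apply tp_unit_beta || apply tp_unit_alpha_beta.
Qed.

Lemma tile_verts_level b t : In t (tile_verts b) -> zw_dot (tile_normal b) t = tile_level b.
Proof. destruct b; intros [<-|[<-|[<-|[]]]]; reflexivity. Qed.

(* The cut [zw_dot l x > 0] is [Tr (tdual l * x) > 0] for totally positive [tdual l]. *)
Ltac cut_with x l :=
  let H := fresh "cut" in
  assert (H : (0 < zw_dot l x)%Z) by (apply zw_dot_pos; [tp_numerics|assumption]).

Lemma tile_support b x : zw_tp x ->
  (tile_level b <= zw_dot (tile_normal b) x)%Z /\
  (zw_dot (tile_normal b) x = tile_level b -> In x (tile_verts b)).
Proof.
  intro Hx. destruct b.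
  - cut_with x (ZW 2 (-1) 2); cut_with x (ZW 1 0 1); cut_with x (ZW 5 (-4) 5);
      cut_with x (ZW 1 (-1) 2); cut_with x (ZW 2 (-1) 1).
    destruct x as [a b c]. unfold zw_dot in *; cbn [zw0 zw1 zw2 tile_normal tile_level] in *.
    split; [lia|]. intro E.
    assert (D : (a = 1 /\ b = 0 /\ c = 0 \/ a = 0 /\ b = 0 /\ c = 1 \/ a = 1 /\ b = 2 /\ c = 1)%Z)
      by lia.
    destruct D as [(-> & -> & ->)|[(-> & -> & ->)|(-> & -> & ->)]]; cbn; tauto.
  - cut_with x (ZW 1 (-1) 2); cut_with x (ZW 1 0 1); cut_with x (ZW 5 (-8) 14);
      cut_with x (ZW 2 (-1) 1); cut_with x (ZW 1 0 2); cut_with x (ZW 2 (-3) 6).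
    destruct x as [a b c]. unfold zw_dot in *; cbn [zw0 zw1 zw2 tile_normal tile_level] in *.
    split; [lia|]. intro E.
    assert (D : (a = 1 /\ b = 0 /\ c = 0 \/ a = 2 /\ b = 1 /\ c = 0 \/ a = 1 /\ b = 2 /\ c = 1)%Z)
      by lia.
    destruct D as [(-> & -> & ->)|[(-> & -> & ->)|(-> & -> & ->)]]; cbn; tauto.
Qed.

(** * The vertex figure at 1 *)

Lemma tp_unit_mul_inj u x y : tp_unit u -> zw_mul u x = zw_mul u y -> x = y.
Proof.
  intros [_ [v E]] H. rewrite zw_mulC in E.
  rewrite <- (zw_mulKV v u x E), <- (zw_mulKV v u y E), H. reflexivity.
Qed.

(* In log-coordinates these units form a hexagon around 1, listed in cyclic order. *)
Definition neighbours : list zw := [alpha; alpha_beta; beta; alpha_inv; alpha_beta_inv; beta_inv].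

Lemma neighbours_tp_unit e : In e neighbours -> tp_unit e.
Proof.
  pose proof tp_unit_alpha; pose proof tp_unit_beta; pose proof tp_unit_alpha_beta.
  intros [<-|[<-|[<-|[<-|[<-|[<-|[]]]]]]]; try assumption.
  - apply (tp_unit_inv alpha); [assumption|reflexivity].
  - apply (tp_unit_inv alpha_beta); [assumption|reflexivity].
  - apply (tp_unit_inv beta); [assumption|reflexivity].
Qed.

(* The six facets through 1: the facet [(h, b)] is [h^-1 * tile b]. *)
Definition star : list (zw * bool) :=
  [(zw_one, true); (zw_one, false); (alpha, true); (beta, false);
   (alpha_beta, true); (alpha_beta, false)].

Lemma star_tp_unit i : In i star -> tp_unit (fst i).
Proof.
  intros [<-|[<-|[<-|[<-|[<-|[<-|[]]]]]]];
    apply tp_unit_one || apply tp_unit_alpha || apply tp_unit_beta || apply tp_unit_alpha_beta.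
Qed.

Definition facet_gap (i : zw * bool) (x : zw) : Z :=
  (zw_dot (tile_normal (snd i)) (zw_mul (fst i) x) - tile_level (snd i))%Z.

Lemma facet_gap_support i x : In i star -> zw_tp x ->
  (0 <= facet_gap i x)%Z /\ (facet_gap i x = 0%Z -> In (zw_mul (fst i) x) (tile_verts (snd i))).
Proof.
  intros Hi Hx. unfold facet_gap.
  destruct (tile_support (snd i) (zw_mul (fst i) x)) as [H1 H2].
  - apply zw_tp_mul; [apply star_tp_unit|]; assumption.
  - split; [lia|]. intro. apply H2. lia.
Qed.

Definition gap_comb (l : list (R * (zw * bool))) (x : zw) : R :=
  fold_right (fun p s => fst p * IZR (facet_gap (snd p) x) + s) 0 l.

Definition star_weights (l : list (R * (zw * bool))) : Prop :=
  Forall (fun p => 0 <= fst p /\ In (snd p) star) l.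

Lemma gap_comb_nonneg l x : star_weights l -> zw_tp x -> 0 <= gap_comb l x.
Proof.
  intros Hl Hx. induction Hl as [|[t i] l [Ht Hi] _ IH]; cbn [gap_comb fold_right fst snd] in *.
  - lra.
  - destruct (facet_gap_support i x Hi Hx) as [G _]. apply IZR_le in G.
    pose proof (Rmult_le_pos _ _ Ht G). unfold gap_comb in IH. lra.
Qed.

Lemma gap_comb_eq0 l x p : star_weights l -> zw_tp x -> gap_comb l x = 0 -> In p l ->
  fst p = 0 \/ facet_gap (snd p) x = 0%Z.
Proof.
  intros Hl Hx. induction Hl as [|[t i] l [Ht Hi] Hl IH]; cbn [gap_comb fold_right fst snd In] in *.
  - intros _ [].
  - intros E [<-|Hp]; cbn [fst snd];
      destruct (facet_gap_support i x Hi Hx) as [G _]; apply IZR_le in G;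
      pose proof (Rmult_le_pos _ _ Ht G); pose proof (gap_comb_nonneg l x Hl Hx);
      unfold gap_comb in *.
    + assert (Z0 : t * IZR (facet_gap i x) = 0) by lra.
      apply Rmult_integral in Z0 as [|E']; [left; assumption|right; apply eq_IZR; exact E'].
    + apply IH; [lra|exact Hp].
Qed.

Ltac comb_identity :=
  intros [x0 x1 x2];
  unfold gap_comb, facet_gap, zw_dot, zw_mul, tile_normal, tile_level,
    zw_one, alpha, beta, alpha_beta;
  cbn [fold_right fst snd zw0 zw1 zw2];
  repeat rewrite ?plus_IZR, ?opp_IZR, ?mult_IZR, ?minus_IZR;
  repeat match goal with v := _ |- _ => subst v end; field.

Ltac star_weights_tac :=
  unfold star_weights; repeat (apply Forall_cons; [cbn; split; [lra|tauto]|]); apply Forall_nil.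

(* The normal cone at 1 is fanned out from the facet [(zw_one, true)] into four simplicial
   cones; the case split on the signs of [q1], [q2], [q3] picks the one containing [k]. *)
Lemma star_decomposition k :
  (forall e, In e neighbours -> (zw_dot k zw_one <= zw_dot k e)%Z) ->
  exists l, star_weights l /\
    forall x, IZR (zw_dot k x - zw_dot k zw_one) = gap_comb l x.
Proof.
  intro H. destruct k as [k0 k1 k2].
  pose proof (H alpha ltac:(cbn; tauto)); pose proof (H alpha_beta ltac:(cbn; tauto));
  pose proof (H beta ltac:(cbn; tauto)); pose proof (H alpha_inv ltac:(cbn; tauto));
  pose proof (H alpha_beta_inv ltac:(cbn; tauto)); pose proof (H beta_inv ltac:(cbn; tauto)).
  clear H. unfold zw_dot, zw_one, alpha, beta, alpha_beta, alpha_inv, beta_inv, alpha_beta_inv in *.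
  cbn [zw0 zw1 zw2] in *.
  assert (g1 : (0 <= - k0 + k2)%Z) by lia.
  assert (g2 : (0 <= 2 * k1 + k2)%Z) by lia.
  assert (g3 : (0 <= k0 + k1)%Z) by lia.
  assert (g4 : (0 <= 4 * k0 - k1 - 2 * k2)%Z) by lia.
  assert (g5 : (0 <= 2 * k0 - k1 - k2)%Z) by lia.
  assert (g6 : (0 <= - k0 - k1 + k2)%Z) by lia.
  apply IZR_le in g1, g2, g3, g4, g5, g6.
  repeat rewrite ?plus_IZR, ?opp_IZR, ?mult_IZR, ?minus_IZR in *.
  set (q1 := - IZR k0 - 6 * IZR k1 - 2 * IZR k2).
  set (q2 := - 2 * IZR k0 - 2 * IZR k1 + IZR k2).
  set (q3 := - 5 * IZR k0 - 2 * IZR k1 + 4 * IZR k2).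
  destruct (Rle_lt_dec 0 q1); [|destruct (Rle_lt_dec 0 q2); [|destruct (Rle_lt_dec 0 q3)]].
  - exists [(IZR k0 + IZR k1, (zw_one, true)); (q1, (zw_one, false));
            (2 * IZR k1 + IZR k2, (alpha, true))].
    split; [star_weights_tac|comb_identity].
  - exists [((4 * IZR k0 - IZR k1 - 2 * IZR k2) / 5, (zw_one, true)); (q2 / 5, (alpha, true));
            (- q1 / 5, (alpha_beta, false))].
    split; [star_weights_tac|comb_identity].
  - exists [((2 * IZR k0 - IZR k1 - IZR k2) / 3, (zw_one, true)); (- q2 / 3, (alpha_beta, true));
            (q3 / 3, (alpha_beta, false))].
    split; [star_weights_tac|comb_identity].
  - exists [(- IZR k0 - IZR k1 + IZR k2, (zw_one, true)); (- q3, (beta, false));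
            (IZR k2 - IZR k0, (alpha_beta, true))].
    split; [star_weights_tac|comb_identity].
Qed.

Section LocalMinimum.

Variable k : zw.
Hypothesis k_min_star : forall e, In e neighbours -> (zw_dot k zw_one <= zw_dot k e)%Z.

Lemma local_min_global x : zw_tp x -> (zw_dot k zw_one <= zw_dot k x)%Z.
Proof.
  intro Hx. destruct (star_decomposition k k_min_star) as [l [Hl E]].
  pose proof (gap_comb_nonneg l x Hl Hx). rewrite <- E in *. apply le_IZR in H. lia.
Qed.

Lemma local_face_in_facet : k <> ZW 0 0 0 ->
  exists i, In i star /\
    forall x, zw_tp x -> zw_dot k x = zw_dot k zw_one -> facet_gap i x = 0%Z.
Proof.
  intro Hk. destruct (star_decomposition k k_min_star) as [l [Hl E]].
  destruct (classic (exists p, In p l /\ fst p <> 0)) as [[p [Hp Hp0]]|Hzero].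
  - exists (snd p). split; [unfold star_weights in Hl; rewrite Forall_forall in Hl; apply Hl, Hp|].
    intros x Hx Ex. assert (G : gap_comb l x = 0) by (rewrite <- E, Ex; f_equal; ring).
    destruct (gap_comb_eq0 l x p Hl Hx G Hp); [contradiction|assumption].
  - exfalso. apply Hk.
    assert (G : forall x, gap_comb l x = 0).
    { intro x. unfold gap_comb. clear E Hl. induction l as [|p l IH]; cbn; [reflexivity|].
      rewrite IH by (intros [q [Hq Hq0]]; apply Hzero; exists q; cbn; tauto).
      destruct (Req_dec (fst p) 0) as [->|Hp]; [ring|].
      exfalso; apply Hzero; exists p; cbn; tauto. }
    assert (Ek : forall x, zw_dot k x = zw_dot k zw_one)
      by (intro x; specialize (E x); rewrite G, minus_IZR in E; apply eq_IZR; lra).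
    apply zw_dot_eq0. intro x. rewrite Ek, <- (Ek (ZW 0 0 0)). unfold zw_dot; cbn; ring.
Qed.

Lemma incl_three {A} (l : list A) p q r : length l = 3%nat ->
  In p l -> In q l -> In r l -> p <> q -> p <> r -> q <> r -> incl l [p; q; r].
Proof.
  intros Hlen Hp Hq Hr Hpq Hpr Hqr. apply NoDup_length_incl.
  - repeat constructor; cbn; intuition.
  - rewrite Hlen; cbn; lia.
  - intros y; cbn; intros [<-|[<-|[<-|[]]]]; assumption.
Qed.

(* Each facet through 1 contains only three totally positive points of O. *)
Lemma local_face_is_facet p q r : k <> ZW 0 0 0 ->
  zw_tp p -> zw_tp q -> zw_tp r ->
  zw_dot k p = zw_dot k zw_one -> zw_dot k q = zw_dot k zw_one -> zw_dot k r = zw_dot k zw_one ->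
  p <> q -> p <> r -> q <> r ->
  exists i, In i star /\ forall x, zw_tp x ->
    (zw_dot k x = zw_dot k zw_one <-> In (zw_mul (fst i) x) (tile_verts (snd i))).
Proof.
  intros Hk Hp Hq Hr Ep Eq Er dpq dpr dqr.
  destruct (local_face_in_facet Hk) as [i [Hi Hface]]. exists i. split; [exact Hi|].
  pose proof (star_tp_unit i Hi) as Hu.
  assert (Hin : forall x, zw_tp x -> zw_dot k x = zw_dot k zw_one ->
                  In (zw_mul (fst i) x) (tile_verts (snd i)))
    by (intros x Hx Ex; apply (facet_gap_support i x Hi Hx), Hface; assumption).
  assert (Hneq : forall x y, x <> y -> zw_mul (fst i) x <> zw_mul (fst i) y)
    by (intros x y Hxy E; apply Hxy, (tp_unit_mul_inj _ _ _ Hu E)).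
  pose proof (incl_three (tile_verts (snd i)) _ _ _ eq_refl (Hin p Hp Ep) (Hin q Hq Eq)
    (Hin r Hr Er) (Hneq _ _ dpq) (Hneq _ _ dpr) (Hneq _ _ dqr)) as Hall.
  intros x Hx. split; [apply Hin; assumption|].
  intro Ht. apply Hall in Ht as [E|[E|[E|[]]]];
    apply (tp_unit_mul_inj _ _ _ Hu) in E; subst; assumption.
Qed.

End LocalMinimum.

Lemma Z_exists_min (P : Z -> Prop) (b : Z) :
  (exists z, P z) -> (forall z, P z -> (b <= z)%Z) ->
  exists z, P z /\ forall z', P z' -> (z <= z')%Z.
Proof.
  intros [z0 H0] Hb. apply NNPP. intro Hn.
  assert (Hnone : forall z, (b <= z)%Z -> ~ P z).
  { intro z. induction z as [z IH] using (well_founded_ind (Z.lt_wf b)). intros Hz Pz.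
    apply Hn. exists z. split; [exact Pz|]. intros z' Pz'. apply Z.nlt_ge. intro Hlt.
    apply (IH z'); [pose proof (Hb z' Pz'); lia|pose proof (Hb z' Pz'); lia|exact Pz']. }
  exact (Hnone z0 (Hb z0 H0) H0).
Qed.

Lemma exists_min_tp_unit n m : (forall x, zw_tp x -> (m <= zw_dot n x)%Z) ->
  exists u, tp_unit u /\ forall u', tp_unit u' -> (zw_dot n u <= zw_dot n u')%Z.
Proof.
  intro Hsup.
  destruct (Z_exists_min (fun z => exists u, tp_unit u /\ z = zw_dot n u) m)
    as [z [[u [Hu ->]] Hmin]].
  - exists (zw_dot n zw_one), zw_one. split; [apply tp_unit_one|reflexivity].
  - intros z [u [[Hu _] ->]]. apply Hsup, Hu.
  - exists u. split; [exact Hu|]. intros u' Hu'. apply Hmin. eauto.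
Qed.

(* Translate a unit minimizing [n] to 1; minimality against the six neighbours there already
   pins the face down to one of the six facets through 1. *)
Theorem lattice_facet_classification n m p q r :
  n <> ZW 0 0 0 -> (forall x, zw_tp x -> (m <= zw_dot n x)%Z) ->
  zw_tp p -> zw_tp q -> zw_tp r ->
  zw_dot n p = m -> zw_dot n q = m -> zw_dot n r = m -> p <> q -> p <> r -> q <> r ->
  exists g b, tp_unit g /\
    forall x, zw_tp x -> (zw_dot n x = m <-> exists t, In t (tile_verts b) /\ x = zw_mul g t).
Proof.
  intros Hn Hsup Hp Hq Hr Ep Eq Er dpq dpr dqr.
  destruct (exists_min_tp_unit n m Hsup) as (u & Hu & Hmin).
  pose proof Hu as [HuTP [v Euv]].
  assert (Hv : tp_unit v) by (apply (tp_unit_inv u); assumption).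
  set (k := zw_twist n u).
  assert (Ek : forall x, zw_dot k x = zw_dot n (zw_mul u x))
    by (intro x; unfold k; rewrite zw_dot_twist; reflexivity).
  assert (Ek1 : zw_dot k zw_one = zw_dot n u) by (rewrite Ek, zw_mulr1; reflexivity).
  assert (Ekv : forall x, zw_dot k (zw_mul v x) = zw_dot n x)
    by (intro x; rewrite Ek, zw_mulKV by exact Euv; reflexivity).
  assert (Hstar : forall e, In e neighbours -> (zw_dot k zw_one <= zw_dot k e)%Z).
  { intros e He. rewrite Ek1, Ek.
    apply Hmin, tp_unit_mul; [exact Hu|apply neighbours_tp_unit, He]. }
  assert (Hk : k <> ZW 0 0 0).
  { intro E. apply Hn, zw_dot_eq0. intro x. rewrite <- Ekv, E. unfold zw_dot; cbn; ring. }
  assert (Hm : zw_dot n u = m).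
  { pose proof (local_min_global k Hstar (zw_mul v p) (zw_tp_mul _ _ (proj1 Hv) Hp)).
    pose proof (Hsup u HuTP). rewrite Ekv, Ek1 in *. lia. }
  assert (Hlev : forall x, zw_dot k (zw_mul v x) = zw_dot k zw_one <-> zw_dot n x = m)
    by (intro x; rewrite Ekv, Ek1, Hm; reflexivity).
  assert (Hvinj : forall x y, x <> y -> zw_mul v x <> zw_mul v y)
    by (intros x y Hxy E; apply Hxy, (tp_unit_mul_inj v); assumption).
  destruct (local_face_is_facet k Hstar (zw_mul v p) (zw_mul v q) (zw_mul v r) Hk
    ltac:(apply zw_tp_mul; [apply Hv|assumption]) ltac:(apply zw_tp_mul; [apply Hv|assumption])
    ltac:(apply zw_tp_mul; [apply Hv|assumption])
    (proj2 (Hlev p) Ep) (proj2 (Hlev q) Eq) (proj2 (Hlev r) Er)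
    (Hvinj _ _ dpq) (Hvinj _ _ dpr) (Hvinj _ _ dqr)) as [[h b] [Hi Hface]].
  pose proof (star_tp_unit _ Hi) as Hh. cbn [fst snd] in *. pose proof Hh as [_ [h' Ehh']].
  assert (Hh' : tp_unit h') by (apply (tp_unit_inv h); assumption).
  exists (zw_mul u h'), b. split; [apply tp_unit_mul; assumption|].
  intros x Hx. rewrite <- Hlev, Hface by (apply zw_tp_mul; [apply Hv|exact Hx]). split.
  - intro Ht. exists (zw_mul h (zw_mul v x)). split; [exact Ht|].
    rewrite <- zw_mulA, (zw_mulKV h' h), zw_mulKV; [reflexivity|exact Euv|].
    rewrite zw_mulC. exact Ehh'.
  - intros [t [Ht ->]]. rewrite <- zw_mulA, (zw_mulKV v u), zw_mulKV; [exact Ht|exact Ehh'|].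
    rewrite zw_mulC. exact Euv.
Qed.

(** * Convex hulls in R^3 *)

Definition comb_pt (l : list (R * pt)) : pt :=
  fold_right (fun tp acc => padd (pscale (fst tp) (snd tp)) acc) pzero l.

Definition comb_wt (l : list (R * pt)) : R := fold_right (fun tp s => fst tp + s) 0 l.

Definition comb_on (S : pt -> Prop) (l : list (R * pt)) : Prop :=
  Forall (fun tp => 0 <= fst tp /\ S (snd tp)) l.

Lemma conv_comb S x : conv S x <-> exists l, comb_on S l /\ comb_wt l = 1 /\ x = comb_pt l.
Proof. reflexivity. Qed.

Lemma conv_of_mem (S : pt -> Prop) x : S x -> conv S x.
Proof.
  intro h. apply conv_comb. exists [(1, x)]. split; [repeat constructor; cbn; lra || exact h|].
  split; [cbn; ring|]. cbn. pt_ring.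
Qed.

Lemma conv_mono (S S' : pt -> Prop) x : (forall y, S y -> S' y) -> conv S x -> conv S' x.
Proof.
  intros H. rewrite !conv_comb. intros (l & Hl & Hw & ->). exists l. split; [|tauto].
  eapply Forall_impl; [|exact Hl]. cbn. intros tp []; auto.
Qed.

Lemma conv_ext (S S' : pt -> Prop) x : (forall y, S y <-> S' y) -> conv S x <-> conv S' x.
Proof. intro H. split; apply conv_mono; intro y; apply H. Qed.

Lemma lin_comb_pt a l :
  lin a (comb_pt l) = fold_right (fun tp s => fst tp * lin a (snd tp) + s) 0 l.
Proof.
  unfold comb_pt. induction l as [|[t y] l IH]; cbn [fold_right fst snd] in *.
  - apply lin_pzero.
  - rewrite lin_padd, lin_pscale, <- IH. reflexivity.
Qed.

Lemma lin_comb_ge (S : pt -> Prop) a c l : comb_on S l -> (forall y, S y -> c <= lin a y) ->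
  c * comb_wt l <= lin a (comb_pt l).
Proof.
  intros Hl Hc. rewrite lin_comb_pt.
  unfold comb_wt. induction Hl as [|[t y] l [Ht Hy] _ IH]; cbn [fold_right fst snd] in *; [lra|].
  pose proof (Rmult_le_compat_l t _ _ Ht (Hc y Hy)). lra.
Qed.

Lemma conv_supporting_face (S : pt -> Prop) a c : (forall y, S y -> c <= lin a y) ->
  forall x, conv S x /\ lin a x = c <-> conv (fun y => S y /\ lin a y = c) x.
Proof.
  intros Hc x. split.
  - rewrite !conv_comb. intros [(l & Hl & Hw & ->) Hx].
    assert (Hface : lin a (comb_pt l) = c * comb_wt l) by (rewrite Hw, Hx; ring).
    clear Hx. rewrite <- Hw. clear Hw.
    induction Hl as [|[t y] l [Ht Hy] Hl IH];
      unfold comb_pt, comb_wt in *; cbn [fold_right fst snd] in *.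
    + exists []. repeat constructor.
    + rewrite lin_padd, lin_pscale in Hface.
      pose proof (lin_comb_ge S a c l Hl Hc). pose proof (Rmult_le_compat_l t _ _ Ht (Hc y Hy)).
      destruct IH as (l' & Hl' & Hw' & Hp'); [unfold comb_pt, comb_wt in *; lra|].
      destruct (Req_dec t 0) as [->|Ht0].
      * exists l'. split; [exact Hl'|]. rewrite <- Hw', <- Hp'. split; [ring|pt_ring].
      * exists ((t, y) :: l'). split; [|cbn; rewrite <- Hw', <- Hp'; split; reflexivity].
        constructor; [|exact Hl']. cbn. repeat split; auto.
        assert (E : t * (lin a y - c) = 0) by (unfold comb_pt, comb_wt in *; lra).
        apply Rmult_integral in E as [|]; [contradiction|lra].
  - intro Hx. split; [apply (conv_mono _ _ _ (fun y h => proj1 h) Hx)|].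
    rewrite conv_comb in Hx; destruct Hx as (l & Hl & Hw & ->).
    rewrite lin_comb_pt, <- (Rmult_1_r c), <- Hw. clear Hw.
    unfold comb_wt. induction Hl as [|[t y] l [_ [_ Hy]] _ IH]; cbn [fold_right fst snd] in *;
      [ring|rewrite IH, Hy; ring].
Qed.

Lemma pmul_comb_pt u l :
  pmul u (comb_pt l) = comb_pt (map (fun tp => (fst tp, pmul u (snd tp))) l).
Proof.
  unfold comb_pt. induction l as [|[t z] l IH]; cbn [map fold_right fst snd] in *; [pt_ring|].
  rewrite <- IH. pt_ring.
Qed.

Lemma comb_wt_map f l : comb_wt (map (fun tp => (fst tp, f (snd tp))) l) = comb_wt l.
Proof. unfold comb_wt. induction l as [|[t z] l IH]; cbn; [|rewrite <- IH]; reflexivity. Qed.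

Lemma conv_mul_set u (T : pt -> Prop) x : conv (mul_set u T) x <-> mul_set u (conv T) x.
Proof.
  split.
  - rewrite conv_comb. intros (l & Hl & Hw & ->).
    assert (Hlift : exists l', comb_on T l' /\ l = map (fun tp => (fst tp, pmul u (snd tp))) l').
    { clear Hw. induction Hl as [|[t y] l [Ht Hy] _ IH].
      - exists []. split; [constructor|reflexivity].
      - destruct IH as [l' [Hl' ->]]. cbn [snd] in Hy. destruct Hy as [z [Tz ->]].
        exists ((t, z) :: l'). split; [constructor; auto|reflexivity]. }
    destruct Hlift as [l' [Hl' ->]]. rewrite comb_wt_map in Hw.
    exists (comb_pt l'). split; [apply conv_comb; exists l'; auto|symmetry; apply pmul_comb_pt].
  - intros [z [Hz ->]]. rewrite conv_comb in Hz; destruct Hz as (l & Hl & Hw & ->).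
    apply conv_comb. exists (map (fun tp => (fst tp, pmul u (snd tp))) l).
    split; [|rewrite comb_wt_map, pmul_comb_pt; auto].
    apply Forall_map. eapply Forall_impl; [|exact Hl]. intros [t y] [Ht Hy]. cbn.
    split; [exact Ht|exists y; auto].
Qed.

Lemma supporting_face_translate (S T : pt -> Prop) a c u :
  (forall y, S y -> c <= lin a y) ->
  (forall y, S y /\ lin a y = c <-> mul_set u T y) ->
  forall x, conv S x /\ lin a x = c <-> mul_set u (conv T) x.
Proof.
  intros Hc Hface x. rewrite conv_supporting_face by exact Hc.
  rewrite <- conv_mul_set. apply conv_ext, Hface.
Qed.

Lemma conv_lin_ge (S : pt -> Prop) a c x :
  (forall y, S y -> c <= lin a y) -> conv S x -> c <= lin a x.
Proof.
  intros Hc Hx. rewrite conv_comb in Hx. destruct Hx as (l & Hl & Hw & ->).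
  pose proof (lin_comb_ge S a c l Hl Hc). rewrite Hw in H. lra.
Qed.

Lemma aff_indep3_linear (f : pt -> pt) p q r :
  (forall x y, f (padd x y) = padd (f x) (f y)) -> (forall t x, f (pscale t x) = pscale t (f x)) ->
  (forall x, f x = pzero -> x = pzero) ->
  aff_indep3 (f p) (f q) (f r) <-> aff_indep3 p q r.
Proof.
  intros Hadd Hscale Hinj.
  assert (Hcomb : forall s t, padd (pscale s (psub (f q) (f p))) (pscale t (psub (f r) (f p)))
                            = f (padd (pscale s (psub q p)) (pscale t (psub r p))))
    by (intros; unfold psub; rewrite !Hadd, !Hscale, !Hadd, !Hscale; reflexivity).
  assert (H0 : f pzero = pzero)
    by (replace pzero with (pscale 0 pzero) by pt_ring; rewrite Hscale; pt_ring).
  split; intros H s t E; apply H; [rewrite Hcomb, E; exact H0|].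
  apply Hinj. rewrite <- Hcomb. exact E.
Qed.

Lemma aff_indep3_distinct p q r : aff_indep3 p q r -> p <> q /\ p <> r /\ q <> r.
Proof.
  intro H. repeat split; intro e; subst.
  - destruct (H 1 0) as [h _]; [pt_ring|lra].
  - destruct (H 0 1) as [_ h]; [pt_ring|lra].
  - destruct (H 1 (-1)) as [h _]; [pt_ring|lra].
Qed.

Definition on_line (x0 d x : pt) : Prop := exists s, x = padd x0 (pscale s d).

Lemma conv_on_line (X : pt -> Prop) x0 d p :
  (forall x, X x -> on_line x0 d x) -> conv X p -> on_line x0 d p.
Proof.
  intros HL Hp. rewrite conv_comb in Hp; destruct Hp as (l & Hl & Hw & ->).
  assert (G : exists s, comb_pt l = padd (pscale (comb_wt l) x0) (pscale s d)).
  { clear Hw. unfold comb_pt, comb_wt.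
    induction Hl as [|[t y] l [_ Hy] _ [s IH]]; cbn [fold_right fst snd] in *.
    - exists 0. pt_ring.
    - destruct (HL y Hy) as [s' ->]. exists (t * s' + s). rewrite IH. pt_ring. }
  destruct G as [s G]. exists s. rewrite G, Hw. pt_ring.
Qed.

Lemma on_line_dependent x0 d p q r :
  on_line x0 d p -> on_line x0 d q -> on_line x0 d r -> ~ aff_indep3 p q r.
Proof.
  intros [sp ->] [sq ->] [sr ->] H.
  destruct (Req_dec sq sp) as [e|e].
  - destruct (H 1 0) as [h _]; [subst sq; pt_ring|lra].
  - destruct (H (sr - sp) (- (sq - sp))) as [_ h]; [pt_ring|apply e; lra].
Qed.

(* If no three points of [X] are affinely independent, [X] lies on a line, and so does
   [conv X]. *)
Lemma conv_aff_indep3 (X : pt -> Prop) p q r :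
  conv X p -> conv X q -> conv X r -> aff_indep3 p q r ->
  exists p' q' r', X p' /\ X q' /\ X r' /\ aff_indep3 p' q' r'.
Proof.
  intros Cp Cq Cr Hi. apply NNPP; intro Hn.
  assert (Hdep : forall p' q' r', X p' -> X q' -> X r' -> ~ aff_indep3 p' q' r')
    by (intros p' q' r' a b c h; apply Hn; exists p', q', r'; auto).
  assert (Hx0 : exists x0, X x0).
  { rewrite conv_comb in Cp; destruct Cp as ([|[t y] l] & Hl & Hw & _); [cbn in Hw; lra|].
    exists y. inversion Hl; subst. apply H1. }
  destruct Hx0 as [x0 X0].
  assert (HL : exists d, forall x, X x -> on_line x0 d x).
  { destruct (classic (exists x1, X x1 /\ x1 <> x0)) as [[x1 [X1 n1]]|Hno].
    - exists (psub x1 x0). intros x Xx.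
      pose proof (Hdep x0 x1 x X0 X1 Xx) as Hd. unfold aff_indep3 in Hd.
      apply not_all_ex_not in Hd as [s Hd]. apply not_all_ex_not in Hd as [t Hd].
      apply imply_to_and in Hd as [Heq Hnz].
      pose proof (f_equal px Heq); pose proof (f_equal py Heq); pose proof (f_equal pz Heq).
      unfold psub, padd, pscale, pzero in *; cbn [px py pz] in *.
      destruct (Req_dec t 0) as [->|ht].
      + exfalso. apply n1. assert (hs : s <> 0) by (intro; apply Hnz; auto).
        apply pt_ext; apply (Rmult_eq_reg_l s); try lra; assumption.
      + assert (E : forall a0 a1 a, s * (a1 + -1 * a0) + t * (a + -1 * a0) = 0 ->
                      a = a0 + - s / t * (a1 + -1 * a0))
          by (intros a0 a1 a E; field_simplify_eq; [lra|exact ht]).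
        exists (- s / t). unfold psub, padd, pscale.
        apply pt_ext; cbn [px py pz]; apply E; assumption.
    - exists pzero. intros x Xx. exists 0.
      assert (x = x0) by (apply NNPP; intro h; apply Hno; exists x; auto).
      subst. pt_ring. }
  destruct HL as [d HL].
  apply (on_line_dependent x0 d p q r); auto; apply (conv_on_line X); auto.
Qed.

Definition cross (u v : pt) : pt :=
  Pt (py u * pz v - pz u * py v) (pz u * px v - px u * pz v) (px u * py v - py u * px v).

Lemma cross_eq0 u v : cross u v = pzero ->
  exists s t, ~ (s = 0 /\ t = 0) /\ padd (pscale s u) (pscale t v) = pzero.
Proof.
  destruct u as [u0 u1 u2], v as [v0 v1 v2]. intro E.
  pose proof (f_equal px E); pose proof (f_equal py E); pose proof (f_equal pz E).
  unfold cross, padd, pscale, pzero in *; cbn [px py pz] in *.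
  destruct (Req_dec u0 0); [destruct (Req_dec u1 0); [destruct (Req_dec u2 0)|]|].
  - exists 1, 0. split; [lra|]. subst. pt_ring.
  - exists v2, (- u2). split; [lra|]. subst. apply pt_ext; cbn; lra.
  - exists v1, (- u1). split; [lra|]. subst. apply pt_ext; cbn; lra.
  - exists v0, (- u0). split; [lra|]. apply pt_ext; cbn; lra.
Qed.

(* [l x (u x v) = (l.v) u - (l.u) v], so [l] orthogonal to [u] and [v] is parallel to [u x v]. *)
Lemma orthogonal_cross l u v : lin l u = 0 -> lin l v = 0 ->
  pscale (lin (cross u v) (cross u v)) l = pscale (lin l (cross u v)) (cross u v).
Proof.
  destruct l as [l0 l1 l2], u as [u0 u1 u2], v as [v0 v1 v2]. unfold lin; cbn. intros Hu Hv.
  apply pt_ext; unfold pscale, cross; cbn [px py pz].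
  - transitivity ((u1 * v2 - u2 * v1) * (l0 * (u1 * v2 - u2 * v1) + l1 * (u2 * v0 - u0 * v2)
      + l2 * (u0 * v1 - u1 * v0)) + (l0 * v0 + l1 * v1 + l2 * v2) * ((u2 * v0 - u0 * v2) * u2
      - (u0 * v1 - u1 * v0) * u1) - (l0 * u0 + l1 * u1 + l2 * u2) * ((u2 * v0 - u0 * v2) * v2
      - (u0 * v1 - u1 * v0) * v1)); [ring|rewrite Hu, Hv; ring].
  - transitivity ((u2 * v0 - u0 * v2) * (l0 * (u1 * v2 - u2 * v1) + l1 * (u2 * v0 - u0 * v2)
      + l2 * (u0 * v1 - u1 * v0)) + (l0 * v0 + l1 * v1 + l2 * v2) * ((u0 * v1 - u1 * v0) * u0
      - (u1 * v2 - u2 * v1) * u2) - (l0 * u0 + l1 * u1 + l2 * u2) * ((u0 * v1 - u1 * v0) * v0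
      - (u1 * v2 - u2 * v1) * v2)); [ring|rewrite Hu, Hv; ring].
  - transitivity ((u0 * v1 - u1 * v0) * (l0 * (u1 * v2 - u2 * v1) + l1 * (u2 * v0 - u0 * v2)
      + l2 * (u0 * v1 - u1 * v0)) + (l0 * v0 + l1 * v1 + l2 * v2) * ((u1 * v2 - u2 * v1) * u1
      - (u2 * v0 - u0 * v2) * u0) - (l0 * u0 + l1 * u1 + l2 * u2) * ((u1 * v2 - u2 * v1) * v1
      - (u2 * v0 - u0 * v2) * v0)); [ring|rewrite Hu, Hv; ring].
Qed.

Lemma lin_self_pos x : x <> pzero -> 0 < lin x x.
Proof.
  intro Hx. unfold lin.
  destruct (Req_dec (px x) 0); [destruct (Req_dec (py x) 0); [destruct (Req_dec (pz x) 0)|]|].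
  - exfalso. apply Hx. apply pt_ext; assumption.
  - pose proof (Rsqr_pos_lt (pz x)). unfold Rsqr in *. nra.
  - pose proof (Rsqr_pos_lt (py x)). unfold Rsqr in *. nra.
  - pose proof (Rsqr_pos_lt (px x)). unfold Rsqr in *. nra.
Qed.

Lemma lin_pscale_eq a b t s y : pscale t a = pscale s b -> t * lin a y = s * lin b y.
Proof.
  intro E. pose proof (f_equal px E); pose proof (f_equal py E); pose proof (f_equal pz E).
  unfold lin, pscale in *; cbn [px py pz] in *.
  transitivity ((t * px a) * px y + (t * py a) * py y + (t * pz a) * pz y); [ring|].
  rewrite H, H0, H1; ring.
Qed.

Definition zw_normal (p q r : zw) : zw :=
  let u0 := (zw0 q - zw0 p)%Z in let u1 := (zw1 q - zw1 p)%Z in let u2 := (zw2 q - zw2 p)%Z in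
  let v0 := (zw0 r - zw0 p)%Z in let v1 := (zw1 r - zw1 p)%Z in let v2 := (zw2 r - zw2 p)%Z in
  ZW (u1 * v2 - u2 * v1) (u2 * v0 - u0 * v2) (u0 * v1 - u1 * v0).

Lemma coords_normal p q r :
  coords (zw_normal p q r) = cross (psub (coords q) (coords p)) (psub (coords r) (coords p)).
Proof.
  unfold zw_normal, coords, cross, psub, padd, pscale; cbn [px py pz zw0 zw1 zw2].
  repeat rewrite ?minus_IZR, ?mult_IZR. apply pt_ext; cbn; ring.
Qed.

(* The normal is the cross product of two integral edge vectors, up to sign. *)
Lemma integral_normal (l : pt) (p q r : zw) : l <> pzero ->
  lin l (coords q) = lin l (coords p) -> lin l (coords r) = lin l (coords p) ->
  aff_indep3 (coords p) (coords q) (coords r) ->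
  exists (n : zw) (kap : R), 0 < kap /\ forall x, lin l (coords x) = kap * IZR (zw_dot n x).
Proof.
  intros Hl EQ ER Hind.
  set (N := coords (zw_normal p q r)).
  assert (HN : N <> pzero).
  { unfold N. rewrite coords_normal. intro E.
    destruct (cross_eq0 _ _ E) as (s & t & Hst & Hdep). apply Hst, Hind, Hdep. }
  assert (Hpar : pscale (lin N N) l = pscale (lin l N) N).
  { unfold N. rewrite coords_normal. apply orthogonal_cross; unfold psub;
      rewrite lin_padd, lin_pscale; lra. }
  pose proof (lin_self_pos N HN) as HNN.
  set (kap0 := lin l N / lin N N).
  assert (El : forall y, lin l y = kap0 * lin N y).
  { intro y. pose proof (lin_pscale_eq _ _ _ _ y Hpar). unfold kap0. field_simplify_eq; lra. }
  assert (Hk0 : kap0 <> 0).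
  { intro E. pose proof (lin_self_pos l Hl). rewrite El, E in *. lra. }
  destruct (Rlt_or_le 0 kap0) as [Hpos|Hneg].
  - exists (zw_normal p q r), kap0. split; [exact Hpos|].
    intro x. rewrite El. unfold N. apply f_equal, lin_coords.
  - set (n := zw_normal p q r).
    exists (ZW (- zw0 n) (- zw1 n) (- zw2 n)), (- kap0). split; [lra|].
    intro x. rewrite El. unfold N. rewrite lin_coords. fold n. unfold zw_dot; cbn [zw0 zw1 zw2].
    repeat rewrite ?plus_IZR, ?mult_IZR, ?opp_IZR. ring.
Qed.

Lemma lin_pmul a b y : lin (pmul a b) y = lin a (pmul b y).
Proof. unfold lin, pmul; cbn; ring. Qed.

Lemma O_plus_zw y : O_plus y <-> exists x, zw_tp x /\ y = zw_emb x.
Proof.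
  split.
  - intros [Hy Hp]. apply in_O_zw in Hy as [x ->]. exists x. auto.
  - intros (x & Hx & ->). split; [apply in_O_zw; eauto|exact Hx].
Qed.

Lemma mul_set_tile g b y :
  mul_set (zw_emb g) (tile b) y <-> exists t, In t (tile_verts b) /\ y = zw_emb (zw_mul g t).
Proof.
  split.
  - intros (z & Hz & ->). apply tile_emb in Hz as (t & Ht & ->). exists t. split; [exact Ht|].
    apply zw_emb_mul.
  - intros (t & Ht & ->). exists (zw_emb t).
    split; [apply tile_emb; eauto|symmetry; apply zw_emb_mul].
Qed.

Lemma is_facet_ext C F G : (forall x, F x <-> G x) -> is_facet C G -> is_facet C F.
Proof.
  intros E (a & c & Ha & Hsup & HG & p & q & r & Gp & Gq & Gr & Hind).
  exists a, c. split; [exact Ha|]. split; [exact Hsup|]. split; [intro x; rewrite E; apply HG|].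
  exists p, q, r. rewrite !E. auto.
Qed.

Lemma pmul_tp_eq0 u x : totally_positive u -> pmul u x = pzero -> x = pzero.
Proof.
  intros (? & ? & ?) E.
  pose proof (f_equal px E); pose proof (f_equal py E); pose proof (f_equal pz E).
  unfold pmul, pzero in *; cbn [px py pz] in *.
  apply pt_ext; cbn [px py pz];
    [apply (Rmult_eq_reg_l (px u))|apply (Rmult_eq_reg_l (py u))|apply (Rmult_eq_reg_l (pz u))];
    lra.
Qed.

Lemma tile_verts_aff_indep3 u b : totally_positive u ->
  aff_indep3 (pmul u (zw_emb zw_one)) (pmul u (zw_emb (tile_apex b)))
    (pmul u (zw_emb alpha_beta)).
Proof.
  intro Hu. apply (aff_indep3_linear (pmul u)); [intros; pt_ring|intros; pt_ring|
    intros; apply (pmul_tp_eq0 u); assumption|].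
  rewrite !zw_emb_basis. apply aff_indep3_linear;
    [apply basis_map_padd|apply basis_map_pscale|apply basis_map_eq0|].
  intros s t E. pose proof (f_equal px E); pose proof (f_equal py E); pose proof (f_equal pz E).
  destruct b; unfold tile_apex, coords, psub, padd, pscale, pzero in *; cbn in *; lra.
Qed.

Lemma tdual_tile_normal_tp b : totally_positive (tdual (tile_normal b)).
Proof. destruct b; unfold tile_normal; tp_numerics. Qed.

Theorem tile_translate_is_facet u b : unit_O u -> totally_positive u ->
  is_facet (conv O_plus) (mul_set u (conv (tile b))).
Proof.
  intros Hu Hp. destruct (proj1 (unit_O_tp u) (conj Hu Hp)) as (g & Hg & ->).
  pose proof Hg as [HgTP [v Egv]].
  assert (Hv : tp_unit v) by (apply (tp_unit_inv g); assumption).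
  set (a := pmul (tdual (tile_normal b)) (zw_emb v)).
  assert (Hlin : forall x, lin a (zw_emb x) = IZR (zw_dot (tile_normal b) (zw_mul v x)))
    by (intro x; unfold a; rewrite lin_pmul, zw_emb_mul; apply lin_tdual).
  assert (HsupO : forall y, O_plus y -> IZR (tile_level b) <= lin a y).
  { intros y Hy. apply O_plus_zw in Hy as (x & Hx & ->). rewrite Hlin. apply IZR_le.
    apply tile_support, zw_tp_mul; [apply Hv|exact Hx]. }
  exists a, (IZR (tile_level b)). split; [|split; [|split]].
  - intro E. assert (Ha : totally_positive a)
      by (apply tp_pmul; [apply tdual_tile_normal_tp|apply Hv]).
    rewrite E in Ha. unfold totally_positive, pzero in Ha; cbn in Ha. lra.
  - intros x Hx. apply (conv_lin_ge O_plus); assumption.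
  - intro x. symmetry. apply supporting_face_translate; [exact HsupO|].
    intro y. rewrite mul_set_tile, O_plus_zw. split.
    + intros [(x' & Hx' & ->) E]. rewrite Hlin in E. apply eq_IZR in E.
      exists (zw_mul v x'). split.
      * apply tile_support; [apply zw_tp_mul; [apply Hv|exact Hx']|exact E].
      * rewrite zw_mulKV; [reflexivity|exact Egv].
    + intros (t & Ht & ->). split; [exists (zw_mul g t); split; [|reflexivity]|].
      * apply zw_tp_mul; [exact HgTP|apply (tile_verts_tp b t Ht)].
      * rewrite Hlin, (zw_mulKV v g) by (rewrite zw_mulC; exact Egv).
        rewrite (tile_verts_level b t Ht). reflexivity.
  - exists (pmul (zw_emb g) (zw_emb zw_one)), (pmul (zw_emb g) (zw_emb (tile_apex b))),
      (pmul (zw_emb g) (zw_emb alpha_beta)).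
    split; [|split; [|split]]; [| | |apply tile_verts_aff_indep3, HgTP];
      eexists; (split; [|reflexivity]); apply conv_of_mem, tile_emb;
      eexists; (split; [|reflexivity]); cbn; tauto.
Qed.

Lemma facet_integral_normal a c p q r : a <> pzero ->
  lin a (zw_emb p) = c -> lin a (zw_emb q) = c -> lin a (zw_emb r) = c ->
  aff_indep3 (zw_emb p) (zw_emb q) (zw_emb r) ->
  exists n kap, 0 < kap /\ n <> ZW 0 0 0 /\ forall x, lin a (zw_emb x) = kap * IZR (zw_dot n x).
Proof.
  intros Ha Ep Eq Er Hind.
  assert (Hl : forall x, lin a (zw_emb x) = lin (basis_dual a) (coords x))
    by (intro x; rewrite zw_emb_basis; apply lin_basis_map).
  rewrite !zw_emb_basis in Hind. apply aff_indep3_linear in Hind;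
    [|apply basis_map_padd|apply basis_map_pscale|apply basis_map_eq0].
  assert (Hl0 : basis_dual a <> pzero) by (intro E; apply Ha, basis_dual_eq0, E).
  rewrite !Hl in Ep, Eq, Er.
  destruct (integral_normal (basis_dual a) p q r Hl0 ltac:(congruence) ltac:(congruence) Hind)
    as (n & kap & Hkap & Hn).
  exists n, kap. split; [exact Hkap|]. split; [|intro x; rewrite Hl; apply Hn].
  intros ->. apply Hl0.
  pose proof (Hn (ZW 1 0 0)); pose proof (Hn (ZW 0 1 0)); pose proof (Hn (ZW 0 0 1)).
  unfold lin, coords, zw_dot in *; cbn in *. apply pt_ext; cbn; lra.
Qed.

Theorem facet_is_tile_translate F : is_facet (conv O_plus) F ->
  exists u b, unit_O u /\ totally_positive u /\ forall x, F x <-> mul_set u (conv (tile b)) x.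
Proof.
  intros (a & c & Ha & Hsup & HF & p & q & r & Fp & Fq & Fr & Hind).
  assert (HsupO : forall y, O_plus y -> c <= lin a y) by (intros; apply Hsup, conv_of_mem; auto).
  assert (Hface : forall z, F z -> conv (fun y => O_plus y /\ lin a y = c) z)
    by (intros z Fz; apply conv_supporting_face, HF; assumption).
  destruct (conv_aff_indep3 _ p q r (Hface p Fp) (Hface q Fq) (Hface r Fr) Hind)
    as (p' & q' & r' & [Hp Ep] & [Hq Eq] & [Hr Er] & Hind').
  apply O_plus_zw in Hp as (xp & Tp & ->), Hq as (xq & Tq & ->), Hr as (xr & Tr & ->).
  destruct (facet_integral_normal a c xp xq xr Ha Ep Eq Er Hind') as (n & kap & Hkap & Hn & Hlin).
  assert (Hlev : forall x, lin a (zw_emb x) = c <-> zw_dot n x = zw_dot n xp).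
  { intro x. rewrite <- Ep, !Hlin. split; [|intros ->; reflexivity].
    intro E. apply eq_IZR, (Rmult_eq_reg_l kap); lra. }
  destruct (aff_indep3_distinct _ _ _ Hind') as (dpq & dpr & dqr).
  assert (Hsupn : forall x, zw_tp x -> (zw_dot n xp <= zw_dot n x)%Z).
  { intros x Hx. apply le_IZR, (Rmult_le_reg_l kap); [exact Hkap|].
    rewrite <- !Hlin, Ep. apply HsupO, O_plus_zw. eauto. }
  destruct (lattice_facet_classification n (zw_dot n xp) xp xq xr Hn Hsupn Tp Tq Tr eq_refl
    (proj1 (Hlev xq) Eq) (proj1 (Hlev xr) Er)
    ltac:(congruence) ltac:(congruence) ltac:(congruence)) as (g & b & Hg & Hcls).
  destruct (proj2 (unit_O_tp (zw_emb g)) (ex_intro _ g (conj Hg eq_refl))) as [HuO HuP].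
  exists (zw_emb g), b. split; [exact HuO|]. split; [exact HuP|].
  intro x. rewrite HF. apply supporting_face_translate; [exact HsupO|].
  intro y. rewrite mul_set_tile, O_plus_zw. split.
  - intros [(x' & Hx' & ->) E]. apply Hlev, (Hcls x' Hx') in E as (t & Ht & ->).
    exists t. auto.
  - intros (t & Ht & ->).
    assert (Hgt : zw_tp (zw_mul g t))
      by (apply zw_tp_mul; [apply Hg|apply (tile_verts_tp b t Ht)]).
    split; [eauto|]. apply Hlev, (Hcls _ Hgt). eauto.
Qed.

Theorem proposition3p2 :
  forall F : pt -> Prop,
    is_facet (conv O_plus) F <->
    exists u : pt, unit_O u /\ totally_positive u /\
      ((forall x, F x <-> mul_set u (conv tri1) x) \/
       (forall x, F x <-> mul_set u (conv tri2) x)).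
Proof.
  intro F. split.
  - intro HF. destruct (facet_is_tile_translate F HF) as (u & b & Hu & Hp & HFu).
    exists u. split; [exact Hu|]. split; [exact Hp|]. destruct b; [left|right]; exact HFu.
  - intros (u & Hu & Hp & [HFu|HFu]); eapply is_facet_ext; try exact HFu.
    + apply (tile_translate_is_facet u true Hu Hp).
    + apply (tile_translate_is_facet u false Hu Hp).
Qed.
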